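(* Let $(\vec u,\vec B)$ and $(\vec t,\vec C)$ be proper factorization patterns over $A$, and let $(v_n)_n$ and $(w_n)_n$ be sequences of words such that $(v_n)_n$ is $(\vec u,\vec B)$-adequate, $(w_n)_n$ is $(\vec t,\vec C)$-adequate, and $v_n\sim_n w_n$ for every $n\ge0$. Then $\vec u=\vec t$ and $\vec B=\vec C$.
   Context: $\mathrm{alph}(u)$ is the set of letters of $u$; for $B\subseteq A$, $B^{=}=\{w\in B^*:\mathrm{alph}(w)=B\}$. $u\lhd v$ means $u$ is a scattered subword of $v$; $\mathrm{Sub}_n(u)=\{w:|w|\le n,\ w\lhd u\}$; $u\sim_n v$ iff $\mathrm{Sub}_n(u)=\mathrm{Sub}_n(v)$. A factorization pattern is $(\vec u,\vec B)$ with $\vec u=(u_0,\dots,u_p)\in(A^* )^{p+1}$, $\vec B=(B_1,\dots,B_p)$ nonempty subsets of $A$. $L_n(\vec u,\vec B)=u_0(B_1^{=})^nu_1\cdots u_{p-1}(B_p^{=})^nu_p$; $(w_n)_n$ is $(\vec u,\vec B)$-adequate if $w_n\in L_n(\vec u,\vec B)$ for all $n$. A pattern is proper if: (1) for $1\le i\le p$ with $u_i\neq\varepsilon$, the first letter of $u_i$ is not in $B_i$, and for $0\le i\le p-1$ with $u_i\neq\varepsilon$, the last letter of $u_i$ is not in $B_{i+1}$; (2) for $1\le i\le p-1$ with $u_i=\varepsilon$, $B_i\not\subseteq B_{i+1}$ and $B_{i+1}\not\subseteq B_i$. *)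

From mathcomp Require Import all_boot.
Set Implicit Arguments. Unset Strict Implicit. Unset Printing Implicit Defensive.

Section Words.
Variable A : finType.

Definition alph (w : seq A) : {set A} := [set x in w].

Definition in_pow (B : {set A}) (n : nat) (w : seq A) : Prop :=
  exists ws : seq (seq A),
    [/\ size ws = n, all (fun x => alph x == B) ws & w = flatten ws].

(* w ∈ u0 (B1^=)^n u1 ... (Bp^=)^n up, with the pattern given as u0 and the
   list of pairs (B_i, u_i), i = 1..p *)
Fixpoint in_Ln_aux (n : nat) (u0 : seq A) (rest : seq ({set A} * seq A))
    (w : seq A) : Prop :=
  match rest with
  | [::] => w = u0
  | (B, u) :: r => exists x y, [/\ w = u0 ++ x ++ y, in_pow B n x & in_Ln_aux n u r y]
  end.

(* Factorization pattern (u_0..u_p) as a seq of size p+1 and (B_1..B_p) as a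
   seq of size p (B_i is nth set0 B (i-1)). *)
Definition in_Ln (n : nat) (u : seq (seq A)) (B : seq {set A}) (w : seq A) : Prop :=
  in_Ln_aux n (head [::] u) (zip B (behead u)) w.

Definition adequate (u : seq (seq A)) (B : seq {set A}) (v : nat -> seq A) : Prop :=
  forall n, in_Ln n u B (v n).

Definition uu (u : seq (seq A)) i := nth [::] u i.
Definition BB (B : seq {set A}) i := nth set0 B i.-1.  (* B_i for 1 <= i <= p *)

Definition proper_pattern (u : seq (seq A)) (B : seq {set A}) : Prop :=
  let p := size B in
  [/\ size u = p.+1,
      (forall i, 1 <= i <= p -> BB B i != set0),
      (forall i a s, 1 <= i <= p -> uu u i = a :: s -> a \notin BB B i),
      (forall i a s, i < p -> uu u i = rcons s a -> a \notin BB B i.+1) &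
      (forall i, 1 <= i < p -> uu u i = [::] ->
          ~~ (BB B i \subset BB B i.+1) /\ ~~ (BB B i.+1 \subset BB B i))].

(* scattered subword = subseq; Sub_n and ~_n *)
Definition Sub_n (n : nat) (u : seq A) : pred (seq A) :=
  fun w => (size w <= n) && subseq w u.

Definition sim_n (n : nat) (u v : seq A) : Prop := Sub_n n u =1 Sub_n n v.

End Words.

From mathcomp Require Import all_boot.
Set Implicit Arguments. Unset Strict Implicit. Unset Printing Implicit Defensive.

(* A factorization pattern is encoded as a sequence of atoms:
   each letter a of a word u_i becomes the atom "a" (denoting the language
   {ε, a}) and each alphabet B_i becomes the atom "B_i" (denoting B_i^* ).
   The language [atom_lang] of an atom sequence is the product of the atom
   languages.
   1. For an adequate sequence (v_n), a word x is a scattered subword of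
      v_(|x|) iff x belongs to the language of the atom sequence of the
      pattern; hence v_n ~_n w_n makes the two atom languages equal.
   2. Properness of a pattern makes its atom sequence "reduced": every star is
      nonempty and adjacent atoms are incompatible in the sense that neither
      can absorb its neighbour.
   3. A reduced atom sequence is determined by its language (induction on the
      sequence: the first atoms must agree, then the tails have equal
      languages).
   4. The pattern is recovered from its atom sequence, so u = t and B = C. *)

Section AtomSequences.
Variable A : finType.

Local Notation atom := (A + {set A})%type.

Fixpoint atom_lang (e : seq atom) (w : seq A) : Prop :=
  match e with
  | [::] => w = [::]
  | inl a :: r => atom_lang r w \/ exists2 w', w = a :: w' & atom_lang r w'
  | inr D :: r => exists y z, [/\ w = y ++ z, all (fun c => c \in D) y & atom_lang r z]
  end.

Definition admits (x : atom) (c : A) : bool :=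
  match x with inl a => a == c | inr D => c \in D end.

Definition loops (x : atom) (c : A) : bool :=
  if x is inr D then c \in D else false.

Lemma atom_lang_nil (e : seq atom) : atom_lang e [::].
Proof. by elim: e => [|[a|D] r IH] //=; [left | exists [::], [::]]. Qed.

Lemma atom_lang_behead (e : seq atom) c w : atom_lang e (c :: w) -> atom_lang e w.
Proof.
elim: e w => [|[a|D] r IH] w //=.
- by case=> [/IH | [w' [_ ->]]]; left.
- case=> [[|b y] [z [/= Ew Hy Hz]]].
  + by exists [::], w; split => //; apply: IH; rewrite Ew.
  + by case: Ew => _ ->; exists y, z; case/andP: Hy.
Qed.

Lemma atom_lang_skip x (e : seq atom) w : atom_lang e w -> atom_lang (x :: e) w.
Proof. by case: x => [a|D] H /=; [left | exists [::], w]. Qed.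

Lemma atom_lang_loop x (e : seq atom) c w :
  loops x c -> atom_lang (x :: e) w -> atom_lang (x :: e) (c :: w).
Proof.
case: x => [//|D] /= cD [y [z [-> Hy Hz]]].
by exists (c :: y), z; rewrite /= cD.
Qed.

Lemma atom_lang_admit x (e : seq atom) c w :
  admits x c -> atom_lang e w -> atom_lang (x :: e) (c :: w).
Proof.
case: x => [a|D] /= xc H; first by right; exists w; rewrite ?(eqP xc).
by apply: (atom_lang_loop (x := inr D)) => //; apply: atom_lang_skip.
Qed.

Lemma atom_lang_pass x (e : seq atom) c w :
  ~~ admits x c -> atom_lang (x :: e) (c :: w) -> atom_lang e (c :: w).
Proof.
case: x => [b|D] /= xc.
- by case=> // [[w' [Eb _] _]]; rewrite Eb eqxx in xc.
- case=> [[|b y] [z [/= Ew Hy Hz]]]; first by rewrite Ew.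
  by case: Ew Hy => <- _ /andP [cD _]; rewrite cD in xc.
Qed.

Lemma atom_lang_step x (e : seq atom) c w :
  ~~ loops x c -> atom_lang (x :: e) (c :: w) -> atom_lang e w.
Proof.
case: x => [b|D] /= xc.
- by case=> [/atom_lang_behead | [w' [_ ->]]].
- by move/(atom_lang_pass (x := inr D)) => /(_ xc) /atom_lang_behead.
Qed.

Definition nonempty_atom (x : atom) : bool :=
  if x is inr D then D != set0 else true.

Definition compatible (x y : atom) : bool :=
  match x, y with
  | inl a, inr D => a \notin D
  | inr C, inl b => b \notin C
  | inr C, inr D => ~~ (C \subset D) && ~~ (D \subset C)
  | inl _, inl _ => true
  end.

Definition compatible_next (x : atom) (e : seq atom) : bool :=
  if e is y :: _ then compatible x y else true.

Fixpoint reduced (e : seq atom) : bool :=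
  if e is x :: r then [&& nonempty_atom x, reduced r & compatible_next x r]
  else true.

Lemma admitted_letter (x : atom) : nonempty_atom x -> exists c, admits x c.
Proof. by case: x => [a|D] /=; [exists a | case/set0Pn => c; exists c]. Qed.

Lemma compatible_letter (x y : atom) :
  nonempty_atom x -> compatible x y -> exists2 c, admits x c & ~~ loops y c.
Proof.
case: x => [a|C] nx cxy; first by exists a; rewrite /= ?eqxx //; case: y cxy.
case: y cxy => [b|D] cxy.
- by have [c Hc] := admitted_letter nx; exists c.
- by case/andP: cxy => /subsetPn [c cC cD] _; exists c.
Qed.

Lemma head_not_absorbed x (r : seq atom) :
  reduced (x :: r) -> exists2 w, atom_lang (x :: r) w & ~ atom_lang r w.
Proof.
elim: r x => [|y r IH] x /and3P [nx red cxy].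
  have [c Hc] := admitted_letter nx.
  by exists [:: c]; first exact: atom_lang_admit.
have [w Hw Nw] := IH y red; have [c xc yc] := compatible_letter nx cxy.
by exists (c :: w); [exact: atom_lang_admit | move/(atom_lang_step yc)].
Qed.

Lemma tail_incl x (r : seq atom) y s c :
  (forall w, atom_lang (x :: r) w -> atom_lang (y :: s) w) ->
  admits x c -> ~~ loops y c -> forall w, atom_lang r w -> atom_lang s w.
Proof. by move=> H xc yc w /(atom_lang_admit xc) /H /(atom_lang_step yc). Qed.

Lemma loops_mismatch x (r : seq atom) y s c :
  reduced (y :: s) -> (forall w, atom_lang (x :: r) w <-> atom_lang (y :: s) w) ->
  loops x c -> ~~ loops y c -> False.
Proof.
move=> red H xc yc; have [w Hw Nw] := head_not_absorbed red.
by apply: Nw; apply: (atom_lang_step yc); apply/H/atom_lang_loop => //; apply/H.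
Qed.

(* Two reduced sequences headed by the same star and related by inclusion
   have related tails: the star cannot swallow what follows it. *)
Lemma star_tail_incl C (s r : seq atom) :
  reduced (inr C :: s) ->
  (forall w, atom_lang (inr C :: s) w -> atom_lang (inr C :: r) w) ->
  forall w, atom_lang s w -> atom_lang r w.
Proof.
case: s => [_ _ w -> | z s /and3P [_ _ cz] H w Hw]; first exact: atom_lang_nil.
have Hpass c w' : c \notin C -> atom_lang (z :: s) (c :: w') -> atom_lang r (c :: w').
  by move=> cC /(atom_lang_skip (inr C)) /H /(atom_lang_pass (x := inr C)); apply.
clear H; case: z cz Hw Hpass => [b|D] /= cz Hw Hpass.
- case: Hw => [Hw | [w' -> Hw']]; last by apply: Hpass => //; right; exists w'.
  by apply: (atom_lang_behead (c := b)); apply: Hpass => //; right; exists w.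
- case/andP: cz => _ /subsetPn [d dD dC].
  apply: (atom_lang_behead (c := d)); apply: Hpass => //.
  exact: (atom_lang_loop (x := inr D)).
Qed.

Lemma reduced_lang_inj (e f : seq atom) :
  reduced e -> reduced f -> (forall w, atom_lang e w <-> atom_lang f w) -> e = f.
Proof.
elim: e f => [|x r IH] [|y s] //.
- by move=> _ red H; have [w /H -> []] := head_not_absorbed red; apply: atom_lang_nil.
- by move=> red _ H; have [w /H -> []] := head_not_absorbed red; apply: atom_lang_nil.
move=> re rf H; have Hs := fun w => iff_sym (H w).
have red_r : reduced r by case/and3P: re.
have red_s : reduced s by case/and3P: rf.
case: x re H Hs => [a|C] re H Hs; case: y rf H Hs => [b|D] rf H Hs.
- have rs : r = s.
    apply: IH => // w; split.
    + by apply: (tail_incl (c := a) (fun w' => proj1 (H w'))); rewrite /= ?eqxx.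
    + by apply: (tail_incl (c := b) (fun w' => proj1 (Hs w'))); rewrite /= ?eqxx.
  subst s; case: (eqVneq a b) => [-> // | nab].
  have [w [Hw | [w' -> Hw']] Nw] := head_not_absorbed re; first by case: Nw.
  case: Nw; apply: (atom_lang_pass (x := inl b)); first by rewrite /= eq_sym.
  by apply/H; right; exists w'.
- have [d dD] : exists d, d \in D by case/and3P: rf => /set0Pn.
  by case: (loops_mismatch (c := d) re Hs).
- have [c cC] : exists c, c \in C by case/and3P: re => /set0Pn.
  by case: (loops_mismatch (c := c) rf H).
- have [eqCD | nCD] := eqVneq C D.
    subst D; congr (_ :: _); apply: IH => // w; split.
    + by apply: (star_tail_incl re) => w' /H.
    + by apply: (star_tail_incl rf) => w' /H.
  have : ~~ (C \subset D) || ~~ (D \subset C) by rewrite -negb_and -eqEsubset.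
  case/orP => /subsetPn [c cC cD].
  + by case: (loops_mismatch (c := c) rf H).
  + by case: (loops_mismatch (c := c) re Hs).
Qed.

End AtomSequences.

Lemma subseq_cat_split (T : eqType) (w x1 x2 : seq T) :
  subseq w (x1 ++ x2) ->
  exists w1 w2, [/\ w = w1 ++ w2, subseq w1 x1 & subseq w2 x2].
Proof.
move/subseqP=> [m sz ->].
exists (mask (take (size x1) m) x1), (mask (drop (size x1) m) x2).
rewrite !mask_subseq -mask_cat ?cat_take_drop //.
by rewrite size_takel // sz size_cat leq_addr.
Qed.

Section PatternAtoms.
Variable A : finType.

Local Notation atom := (A + {set A})%type.

Fixpoint pattern_atoms (u0 : seq A) (rest : seq ({set A} * seq A)) : seq atom :=
  map inl u0 ++ (if rest is (B, u) :: r then inr B :: pattern_atoms u r else [::]).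

(* Unfolding equation, usable when the list of pairs is not a constructor. *)
Lemma pattern_atomsE u0 rest :
  pattern_atoms u0 rest =
  map inl u0 ++ (if rest is (B, u) :: r then inr B :: pattern_atoms u r else [::]).
Proof. by case: rest. Qed.

Definition atoms (u : seq (seq A)) (B : seq {set A}) : seq atom :=
  pattern_atoms (head [::] u) (zip B (behead u)).

Lemma atom_lang_letters (s : seq A) (l : seq atom) w :
  atom_lang (map inl s ++ l) w <->
  exists w1 w2, [/\ w = w1 ++ w2, subseq w1 s & atom_lang l w2].
Proof.
elim: s w => [|a s IH] w.
  split=> [H | [w1 [w2 [-> H1 H2]]]]; first by exists [::], w.
  by case: w1 H1.
split=> /=.
- case=> [/IH [w1 [w2 [-> H1 H2]]] | [w' -> /IH [w1 [w2 [-> H1 H2]]]]].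
  + by exists w1, w2; split=> //; apply: subseq_trans H1 (subseq_cons _ _).
  + by exists (a :: w1), w2; rewrite /= eqxx.
- case=> [[|b w1] [w2 [-> H1 H2]]].
  + by left; apply/IH; exists [::], w2; rewrite sub0seq.
  + case: (eqVneq b a) H1 => [-> /= | nba /=]; rewrite ?eqxx ?(negbTE nba) => H1.
    * by right; exists (w1 ++ w2) => //; apply/IH; exists w1, w2.
    * by left; apply/IH; exists (b :: w1), w2.
Qed.

Lemma in_pow_subseq (B : {set A}) n x y :
  in_pow B n x -> size y <= n -> all (fun c => c \in B) y -> subseq y x.
Proof.
case=> ws [<- Hall ->].
elim: ws y Hall => [|z ws IH] [|b y] //=; rewrite ?sub0seq //.
move=> /andP [/eqP Hz Hall] Hs /andP [bB Hy].
by rewrite -cat1s cat_subseq ?IH // sub1seq; move: bB; rewrite -Hz inE.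
Qed.

Lemma subseq_in_pow (B : {set A}) n x y :
  in_pow B n x -> subseq y x -> all (fun c => c \in B) y.
Proof.
case=> ws [_ Hall ->] /mem_subseq Hsub; apply/allP => c /Hsub /flattenP [z zws cz].
by move/allP: Hall => /(_ z zws) /eqP <-; rewrite inE.
Qed.

Lemma in_Ln_subseq n (rest : seq ({set A} * seq A)) u0 x :
  in_Ln_aux n u0 rest x ->
  forall w, size w <= n -> (subseq w x <-> atom_lang (pattern_atoms u0 rest) w).
Proof.
elim: rest u0 x => [|[B u] r IH] u0 x /=.
  move=> -> w _; split=> [H | /atom_lang_letters [w1 [w2 [-> H1 /= ->]]]].
  + by apply/atom_lang_letters; exists w, [::]; rewrite cats0.
  + by rewrite cats0.
case=> x1 [y [-> Hp Hr]] w Hw; split.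
- move/subseq_cat_split => [w0 [w' [Ew H0 /subseq_cat_split [w1 [w2 [Ew' H1 H2]]]]]].
  have Hs : size w2 <= n.
    by apply: leq_trans Hw; rewrite Ew Ew' !size_cat addnA leq_addl.
  apply/atom_lang_letters; exists w0, w'; split=> //; exists w1, w2; split=> //.
  + exact: subseq_in_pow Hp H1.
  + exact/(IH _ _ Hr w2 Hs).
- case/atom_lang_letters=> w0 [w' [Ew H0 [w1 [w2 [Ew' H1 H2]]]]].
  have Hs1 : size w1 <= n.
    by apply: leq_trans Hw; rewrite Ew Ew' !size_cat addnCA leq_addr.
  have Hs2 : size w2 <= n.
    by apply: leq_trans Hw; rewrite Ew Ew' !size_cat addnA leq_addl.
  rewrite Ew Ew' cat_subseq // cat_subseq //; first exact: in_pow_subseq Hp Hs1 H1.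
  exact/(IH _ _ Hr w2 Hs2).
Qed.

Lemma adequate_subwords (u : seq (seq A)) B v :
  adequate u B v -> forall x, subseq x (v (size x)) <-> atom_lang (atoms u B) x.
Proof. by move=> H x; apply: (in_Ln_subseq (H (size x))). Qed.

Lemma reduced_letters (s : seq A) (l : seq atom) :
  reduced l ->
  (forall s' a, s = rcons s' a -> compatible_next (inl a) l) ->
  reduced (map inl s ++ l).
Proof.
elim: s => [//|a s IH] red Hlast /=.
rewrite IH //; last by move=> s' b E; apply: (Hlast (a :: s')); rewrite E.
by case: s {IH} Hlast => [|b s] // /(_ [::] a erefl); case: l red.
Qed.

Lemma proper_behead u0 (u : seq (seq A)) B1 (B : seq {set A}) :
  proper_pattern (u0 :: u) (B1 :: B) -> proper_pattern u B.
Proof.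
case=> /= [[su] Hne Hf Hl He]; split=> //.
- by move=> [|i] // Hi; apply: (Hne i.+2).
- by move=> [|i] // a s Hi E; apply: (Hf i.+2 a s).
- by move=> i a s Hi E; apply: (Hl i.+1 a s).
- by move=> [|i] // Hi E; apply: (He i.+2).
Qed.

Lemma proper_reduced (u : seq (seq A)) (B : seq {set A}) :
  proper_pattern u B -> reduced (atoms u B).
Proof.
elim: B u => [|B1 B IH] [|u0 [|u1 u]] pu; case: (pu) => //= su Hne Hf Hl He.
  by apply: reduced_letters.
have red_tail := IH _ (proper_behead pu).
have compat_head : compatible_next (inr B1) (pattern_atoms u1 (zip B u)).
  case E: u1 => [|a s]; last by rewrite pattern_atomsE /= (Hf 1 a s) ?E.
  case: B u su He {IH pu red_tail Hne Hf Hl} => [|B2 B] [|u2 u] //= su He.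
  by have [/negPf -> /negPf ->] := He 1 isT E.
apply: reduced_letters => [|s a E]; last exact: (Hl 0 a s).
by apply/and3P; split; [exact: (Hne 1 isT) | exact: red_tail | exact: compat_head].
Qed.

Definition no_leading_letter (X : seq atom) : bool :=
  if X is inl _ :: _ then false else true.

Lemma cat_letters_inj (s t : seq A) (X Y : seq atom) :
  map inl s ++ X = map inl t ++ Y ->
  no_leading_letter X -> no_leading_letter Y -> s = t /\ X = Y.
Proof.
elim: s t => [|a s IH] [|b t] /=; [by move=> <- | by move=> -> | by move=> <- |].
by case=> -> /IH H nX nY; have [-> ->] := H nX nY.
Qed.

Lemma pattern_atoms_inj (u0 t0 : seq A) r1 r2 :
  pattern_atoms u0 r1 = pattern_atoms t0 r2 -> u0 = t0 /\ r1 = r2.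
Proof.
elim: r1 u0 t0 r2 => [|[B u] r IH] u0 t0 [|[C t] r2] /=
  /cat_letters_inj /(_ isT isT) [-> //] [-> /IH [-> ->]] //.
Qed.

Lemma atoms_inj (u t : seq (seq A)) (B C : seq {set A}) :
  size u = (size B).+1 -> size t = (size C).+1 ->
  atoms u B = atoms t C -> u = t /\ B = C.
Proof.
case: u t => [|u0 u] [|t0 t] //= [su] [st].
rewrite /atoms /= => /pattern_atoms_inj [-> E].
have := congr1 unzip1 E; have := congr1 unzip2 E.
by rewrite !unzip1_zip ?unzip2_zip ?su ?st // => -> ->.
Qed.

End PatternAtoms.

Theorem lemma4 (A : finType) (u t : seq (seq A)) (B C : seq {set A})
    (v w : nat -> seq A) :
  proper_pattern u B -> proper_pattern t C ->
  adequate u B v -> adequate t C w ->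
  (forall n, sim_n n (v n) (w n)) ->
  u = t /\ B = C.
Proof.
move=> pu pt av aw sim.
have same_lang x : atom_lang (atoms u B) x <-> atom_lang (atoms t C) x.
  have := sim (size x) x; rewrite /Sub_n leqnn /= => same_sub.
  split=> [/(adequate_subwords av) | /(adequate_subwords aw)].
  + by rewrite same_sub => /(adequate_subwords aw).
  + by rewrite -same_sub => /(adequate_subwords av).
have same_atoms := reduced_lang_inj (proper_reduced pu) (proper_reduced pt) same_lang.
case: pu pt => su _ _ _ _ [st _ _ _ _].
exact: atoms_inj su st same_atoms.
Qed.
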